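(* Let $r_1,\dots,r_N$ be rational numbers in arithmetic progression. Write $r_1=b/a$ and $d=r_2-r_1=v/u$ with $a,u$ positive integers, $b,v\in\mathbb{Z}$, $\gcd(a,b)=\gcd(u,v)=1$, and let $s=\operatorname{lcm}(a,u)$. Write $r_i=x_i/s$ with $x_i\in\mathbb{Z}$ for $1\le i\le N$. Let $0<\delta<1$ and set $m=\lceil 1/\delta\rceil$. If $s\ge\prod_{j=1}^{2m-1}j!$, then $$\big|\{\,i : \gcd(x_i,s)\le s^\delta\,\}\big|\ \ge\ \Big\lfloor \frac{N}{2m}\Big\rfloor.$$ *)

From HB Require Import structures.
From mathcomp Require Import all_boot all_order all_algebra.
From mathcomp Require Import reals exp.
Set Implicit Arguments. Unset Strict Implicit. Unset Printing Implicit Defensive.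

From HB Require Import structures.
From mathcomp Require Import all_boot all_order all_algebra.
From mathcomp Require Import reals exp.
From mathcomp Require Import ring lra.
Set Implicit Arguments. Unset Strict Implicit. Unset Printing Implicit Defensive.
Import Order.TTheory GRing.Theory Num.Theory.

(* Clearing denominators gives x_i = A + (i - 1) B with gcd(A, B, s) = 1, so a
   common divisor of gcd(x_i, s) and gcd(x_j, s) divides j - i.  For n
   consecutive indices the numbers g_k = gcd(x_(i+k), s) therefore satisfy
   prod g_k <= lcm(g_k) * prod_(j<n) j! <= s * prod_(j<n) j!, since
   gcd(lcm_(k'<k) g_k', g_k) divides prod_(k'<k) (k - k') = k!.  For n = 2m the
   hypothesis on s bounds this by s^2, whereas if every g_k exceeded s^delta
   the product would exceed s^(2 m delta) >= s^2.  So every block of 2m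
   consecutive indices contains an index with gcd(x_i, s) <= s^delta. *)

Lemma gcdnM_dvd m n c : gcdn (m * n) c %| gcdn m c * gcdn n c.
Proof.
rewrite ![gcdn _ c]gcdnC muln_gcdr dvdn_gcd; apply/andP; split.
  by rewrite dvdn_mull // dvdn_gcdl.
apply: (@dvdn_trans (gcdn (c * n) (m * n))).
  by rewrite dvdn_gcd dvdn_gcdr andbT dvdn_mulr // dvdn_gcdl.
by rewrite -muln_gcdl mulnC.
Qed.

Lemma gcdn_biglcm_dvd_prod I (r : seq I) (P : pred I) (F : I -> nat) c :
  gcdn (\big[lcmn/1]_(i <- r | P i) F i) c %| \prod_(i <- r | P i) gcdn (F i) c.
Proof.
elim/big_ind2: _ => [|p1 m1 p2 m2 dv1 dv2|//]; first by rewrite gcd1n.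
have lcm_dvdM : lcmn m1 m2 %| m1 * m2 by rewrite -muln_lcm_gcd dvdn_mulr.
apply: (dvdn_trans _ (dvdn_mul dv1 dv2)); apply: (dvdn_trans _ (gcdnM_dvd m1 m2 c)).
by rewrite dvdn_gcd dvdn_gcdr andbT (dvdn_trans (dvdn_gcdl _ _) lcm_dvdM).
Qed.

Lemma prod_ord_subn_fact n : \prod_(k < n) (n - k) = n`!.
Proof.
elim: n => [|n IHn]; first by rewrite big_ord0.
rewrite big_ord_recl subn0 factS -IHn.
by congr (_ * _); apply: eq_bigr => k _; rewrite /bump /= subSS.
Qed.

Lemma prod_dvd_biglcm_prod_fact (g : nat -> nat) n :
  (forall k l, k < l < n -> gcdn (g k) (g l) %| l - k) ->
  \prod_(k < n) g k %| \big[lcmn/1]_(k < n) g k * \prod_(k < n) k`!.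
Proof.
elim: n => [|n IHn] gcd_dvd; first by rewrite !big_ord0.
rewrite !big_ord_recr /=; set L := \big[lcmn/1]_(k < n) _.
have dvd_fact : gcdn L (g n) %| n`!.
  apply: (dvdn_trans (gcdn_biglcm_dvd_prod _ _ _ _)).
  rewrite -prod_ord_subn_fact; elim/big_ind2: _ => // [*|k _]; first exact: dvdn_mul.
  by rewrite gcd_dvd // ltn_ord ltnSn.
apply: (@dvdn_trans (L * \prod_(k < n) k`! * g n)).
  rewrite dvdn_mul // IHn // => k l /andP[lt_kl lt_ln].
  by rewrite gcd_dvd // lt_kl ltnS ltnW.
by rewrite mulnAC -(muln_lcm_gcd L) -mulnA dvdn_mul // mulnC dvdn_mul.
Qed.

Lemma prod_le_mul_prod_fact (g : nat -> nat) n s : 0 < s ->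
  (forall k, k < n -> g k %| s) ->
  (forall k l, k < l < n -> gcdn (g k) (g l) %| l - k) ->
  \prod_(k < n) g k <= s * \prod_(k < n) k`!.
Proof.
move=> s_gt0 g_dvd gcd_dvd; apply: dvdn_leq.
  by rewrite muln_gt0 s_gt0 prodn_gt0 // => k; exact: fact_gt0.
apply: (dvdn_trans (prod_dvd_biglcm_prod_fact gcd_dvd)).
by rewrite dvdn_mul //; apply/dvdn_biglcmP => k _; exact: g_dvd.
Qed.

Local Open Scope ring_scope.

Lemma dvdn_ap_diff (A B : int) (s c i j : nat) :
  gcdz (gcdz A B) s%:Z = 1 -> (i <= j)%N -> (c %| s)%N ->
  (c%:Z %| A + i%:Z * B)%Z -> (c%:Z %| A + j%:Z * B)%Z -> (c %| j - i)%N.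
Proof.
move=> coprimeABs le_ij dvd_s dvd_i dvd_j.
have dvdB : (c%:Z %| (j - i)%N%:Z * B)%Z.
  by rewrite -subzn // (_ : _ * B = A + j%:Z * B - (A + i%:Z * B)) ?rpredB //; ring.
have dvdA : (c%:Z %| (j - i)%N%:Z * A)%Z.
  rewrite -subzn // (_ : _ * A = j%:Z * (A + i%:Z * B) - i%:Z * (A + j%:Z * B)); last by ring.
  by rewrite rpredB // dvdz_mull.
have dvds : (c%:Z %| (j - i)%N%:Z * s%:Z)%Z by rewrite dvdz_mull.
have : (c%:Z %| gcdz (gcdz ((j - i)%N%:Z * A) ((j - i)%N%:Z * B)) ((j - i)%N%:Z * s%:Z))%Z.
  by rewrite !dvdz_gcd dvdA dvdB dvds.
by rewrite -!mulz_gcdr coprimeABs mulr1.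
Qed.

Lemma prod_gcdn_ap_le (A B : int) (s i n : nat) : (0 < s)%N ->
  gcdz (gcdz A B) s%:Z = 1 ->
  (\prod_(k < n) gcdn `|(A + (i + k)%N%:Z * B)%R| s <= s * \prod_(k < n) k`!)%N.
Proof.
move=> s_gt0 coprimeABs.
apply: (@prod_le_mul_prod_fact (fun k => gcdn `|A + (i + k)%N%:Z * B| s)) => //.
  by move=> k _; exact: dvdn_gcdr.
move=> k l /andP[lt_kl _]; rewrite -(subnDl i); apply: (dvdn_ap_diff coprimeABs).
- by rewrite leq_add2l ltnW.
- exact: dvdn_trans (dvdn_gcdl _ _) (dvdn_gcdr _ _).
- exact: dvdn_trans (dvdn_gcdl _ _) (dvdn_gcdl _ _).
- exact: dvdn_trans (dvdn_gcdr _ _) (dvdn_gcdl _ _).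
Qed.

Lemma coprime_divn_gcdn a u : (0 < a)%N -> coprime (a %/ gcdn a u) (u %/ gcdn a u).
Proof.
move=> a_gt0; have g_gt0 : (0 < gcdn a u)%N by rewrite gcdn_gt0 a_gt0.
rewrite /coprime -(eqn_pmul2r g_gt0) mul1n muln_gcdl.
by rewrite !divnK ?dvdn_gcdl ?dvdn_gcdr.
Qed.

Lemma lcmn_divn_gcdn a u : lcmn a u = (a * (u %/ gcdn a u))%N.
Proof. by rewrite /lcmn muln_divA // dvdn_gcdr. Qed.

Lemma lcmn_ap_numerators (a u : nat) (b v : int) :
  (0 < a)%N -> (0 < u)%N -> coprimez b a%:Z -> coprimez v u%:Z ->
  exists A B : int, gcdz (gcdz A B) (lcmn a u)%:Z = 1 /\
    forall (i : nat) (y : int),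
      b%:~R / a%:R + i%:R * (v%:~R / u%:R) = y%:~R / (lcmn a u)%:R :> rat ->
      y = A + i%:Z * B.
Proof.
move=> a_gt0 u_gt0 cop_ba cop_vu.
set a' := (a %/ gcdn a u)%N; set u' := (u %/ gcdn a u)%N.
have s_au' : lcmn a u = (a * u')%N by exact: lcmn_divn_gcdn.
have s_ua' : lcmn a u = (u * a')%N by rewrite lcmnC lcmn_divn_gcdn gcdnC.
exists (b * u'%:Z), (v * a'%:Z); split.
  rewrite gcdzAC s_au' PoszM -mulz_gcdl (eqP cop_ba) mul1r gcdzC /=.
  apply/eqP; rewrite -[_ == 1]/(coprimez _ _) coprimezMl.
  rewrite (coprimez_dvdr (dvdn_div (dvdn_gcdr a u)) cop_vu) coprimezE /=.
  exact: coprime_divn_gcdn.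
move=> i y E; apply: (@intr_inj rat).
have s_neq0 : (lcmn a u)%:R != 0 :> rat by rewrite pnatr_eq0 -lt0n lcmn_gt0 a_gt0.
have a_neq0 : a%:R != 0 :> rat by rewrite pnatr_eq0 -lt0n.
have u_neq0 : u%:R != 0 :> rat by rewrite pnatr_eq0 -lt0n.
rewrite -[y%:~R](divfK s_neq0) -E mulrDl {1}s_au' s_ua' !natrM.
rewrite rmorphD !rmorphM /= -!natz.
by field; rewrite u_neq0 a_neq0.
Qed.

Lemma count_iota_ge_divn (P : pred nat) m n K :
  (forall i, (m <= i)%N -> (i + K <= m + n)%N -> has P (iota i K)) ->
  (n %/ K <= count P (iota m n))%N.
Proof.
move=> windowP; have := leq_divM n K; move: (n %/ K)%N => q.
elim: q m n windowP => [//|q IHq] m n windowP le_qK_n.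
have le_K_n : (K <= n)%N by apply: leq_trans le_qK_n; rewrite mulSn leq_addr.
rewrite -(subnKC le_K_n) iotaD count_cat -add1n leq_add //.
  by rewrite -has_count windowP // leq_add2l.
apply: IHq => [i le_i le_iK|]; last by rewrite leq_subRL // -mulSn.
by apply: windowP; [exact: leq_trans (leq_addr _ _) le_i | rewrite -addnA subnKC in le_iK].
Qed.

Lemma prod_fact_from1 n : (\prod_(1 <= j < n) j`! = \prod_(j < n) j`!)%N.
Proof.
case: n => [|n]; first by rewrite big_geq // big_ord0.
by rewrite -(big_mkord xpredT) [RHS]big_ltn // fact0 mul1n.
Qed.

Lemma ceil_inv_mul_ge1 (R : archiRealFieldType) (delta : R) : 0 < delta ->
  1 <= (`|Num.ceil delta^-1|%N)%:R * delta.
Proof.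
move=> delta_gt0; have inv_gt0 : 0 < delta^-1 by rewrite invr_gt0.
have ceil_ge0 : 0 <= Num.ceil delta^-1 by rewrite ceil_ge0 (lt_trans _ inv_gt0) ?ltrN10.
rewrite natr_absz ger0_norm //.
apply: le_trans (ler_wpM2r (ltW delta_gt0) (ceil_ge delta^-1)).
by rewrite mulVf ?lt0r_neq0.
Qed.

Lemma sqrn_lt_prod_powR (R : realType) (s n : nat) (delta : R) (G : nat -> nat) :
  (0 < s)%N -> 2 <= n%:R * delta ->
  (forall k, (k < n)%N -> s%:R `^ delta < (G k)%:R) ->
  (s ^ 2 < \prod_(k < n) G k)%N.
Proof.
move=> s_gt0 two_le ltG.
have n_gt0 : (0 < n)%N.
  by rewrite lt0n; apply/eqP => n0; move: two_le; rewrite n0 mul0r; lra.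
rewrite -(ltr_nat R) natrX natr_prod -(big_mkord xpredT (fun k => (G k)%:R)).
apply: (le_lt_trans _ (ltr_prod_nat (E1 := fun=> s%:R `^ delta) n_gt0 _)).
  rewrite prodr_const_nat subn0 -(powR_mulrn n (powR_ge0 _ _)) -powRrM.
  rewrite -(powR_mulrn 2 (ler0n _ s)).
  by apply: ler_powR; [rewrite ler1n | rewrite mulrC].
by move=> k /andP[_ lt_kn]; rewrite powR_ge0 ltG.
Qed.

Theorem lemma5p1 (R : realType) (N : nat) (r : nat -> rat) (d : rat)
    (a u : nat) (b v : int) (x : nat -> int) (delta : R)
    (ha : (0 < a)%N) (hu : (0 < u)%N)
    (hab : coprimez b a%:Z) (huv : coprimez v u%:Z)
    (hr1 : r 1%N = b%:~R / a%:R)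
    (hd : d = v%:~R / u%:R)
    (hAP : forall i : nat, (1 <= i <= N)%N -> r i = r 1%N + (i.-1)%:R * d)
    (hx : forall i : nat, (1 <= i <= N)%N -> r i = (x i)%:~R / (lcmn a u)%:R)
    (hdelta : 0 < delta < 1)
    (hs : (\prod_(1 <= j < (2 * `|Num.ceil (delta^-1)|%N - 1).+1) j`! <= lcmn a u)%N) :
    (N %/ (2 * `|Num.ceil (delta^-1)|%N)
       <= count (fun i : nat => (((gcdz (x i) (lcmn a u)%:Z)%:~R : R)
                                  <= ((lcmn a u)%:R : R) `^ delta)%R)
                (iota 1 N))%N.
Proof.
set s := lcmn a u; set m := `|Num.ceil delta^-1|%N.
have s_gt0 : (0 < s)%N by rewrite lcmn_gt0 ha hu.
have m_delta : 1 <= m%:R * delta by apply: ceil_inv_mul_ge1; case/andP: hdelta.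
have m_gt0 : (0 < m)%N by rewrite lt0n; apply/eqP => m0; move: m_delta; rewrite m0 mul0r ler10.
have [A [B [coprimeABs ap_num]]] := lcmn_ap_numerators ha hu hab huv.
have x_ap j : (1 <= j <= N)%N -> x j = A + (j.-1)%:Z * B.
  by move=> le1jN; apply: ap_num; rewrite -hr1 -hd -hAP // hx.
rewrite subn1 prednK ?muln_gt0 // prod_fact_from1 in hs.
apply: count_iota_ge_divn => -[//|i] _ le_window; apply/negPn/negP => /hasPn large_gcd.
have gcd_gt k : (k < 2 * m)%N -> s%:R `^ delta < (gcdn `|x (i.+1 + k)%N| s)%:R :> R.
  move=> lt_k; rewrite ltNge; apply: large_gcd.
  by rewrite mem_iota leq_addr ltn_add2l.
have two_le : 2 <= (2 * m)%:R * delta by rewrite natrM -mulrA; lra.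
have gcd_ap : \prod_(k < 2 * m) gcdn `|x (i.+1 + k)%N| s =
              \prod_(k < 2 * m) gcdn `|A + (i + k)%N%:Z * B| s.
  apply: eq_bigr => k _; rewrite x_ap addSn //=.
  by rewrite -(ltn_add2l 1) (leq_trans _ le_window) // add1n addSn ltnS ltn_add2l.
have := sqrn_lt_prod_powR s_gt0 two_le gcd_gt; rewrite gcd_ap ltnNge => /negP; apply.
apply: leq_trans (prod_gcdn_ap_le i (2 * m) s_gt0 coprimeABs) _.
by rewrite expnS expn1 leq_mul2l hs orbT.
Qed.
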